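(* Let $\beta\in(0,\pi/2)$ and put $\delta=\cot\beta>0$. Let $s,r\in\mathbb{R}$ with $D:=\sqrt{s^2+(\delta s-r)^2}>0$, and put $\gamma_1(s)=(2s\delta,2s,0)$, $\gamma_2(r)=(2r,0,0)\in\mathbb{R}^3$. Let $x=(x_1,x_2,x_3)$ and $y=(y_1,y_2,y_3)$ be points of $\mathbb{R}^3$ satisfying \[ \sqrt{(x_1-2s\delta)^2+(x_2-2s)^2+x_3^2}+\sqrt{(x_1-2r)^2+x_2^2+x_3^2}=\sqrt{(y_1-2s\delta)^2+(y_2-2s)^2+y_3^2}+\sqrt{(y_1-2r)^2+y_2^2+y_3^2}, \] \[ \frac{\delta(x_1-2s\delta)+(x_2-2s)}{\sqrt{(x_1-2s\delta)^2+(x_2-2s)^2+x_3^2}}=\frac{\delta(y_1-2s\delta)+(y_2-2s)}{\sqrt{(y_1-2s\delta)^2+(y_2-2s)^2+y_3^2}}, \] \[ \frac{x_1-2r}{\sqrt{(x_1-2r)^2+x_2^2+x_3^2}}=\frac{y_1-2r}{\sqrt{(y_1-2r)^2+y_2^2+y_3^2}}. \] Define $\rho\ge0$ by $\cosh\rho=\dfrac{|x-\gamma_1(s)|+|x-\gamma_2(r)|}{2D}$ (the prolate spheroidal ''radial'' coordinate of $x$ with respect to the foci $\gamma_1(s),\gamma_2(r)$, which are at distance $2D$ apart; by the first equation it is the same for $y$). If $\rho>\ln(5+8\delta)$, then either $x=y$ or $x=(y_1,y_2,-y_3)$.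
   Context: This is the setting of multistatic SAR with transmitters on the line $\gamma_1$ and receivers on the line $\gamma_2$, the two lines lying in the plane $x_3=0$ and meeting at angle $\beta$. The three equations express that the scene points $x$ and $y$ give the same bistatic travel distance $|\gamma_1(s)-\cdot|+|\cdot-\gamma_2(r)|$ and the same derivatives of it with respect to $s$ and $r$, i.e. they are the conditions for two points of the canonical relation of the forward scattering operator (phase $\omega(t-(|\gamma_1(s)-x|+|x-\gamma_2(r)|)/c_0)$) to project to the same point of the data cotangent space. The conclusion says the only possible artefact is the mirror image across the plane $x_3=0$. *)

From Stdlib Require Export Reals.
Open Scope R_scope.

Definition pt3 : Type := (R * R * R)%type.
Definition px1 (p : pt3) : R := fst (fst p).
Definition px2 (p : pt3) : R := snd (fst p).
Definition px3 (p : pt3) : R := snd p.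

Definition dist3 (p q : pt3) : R :=
  sqrt ((px1 p - px1 q)^2 + (px2 p - px2 q)^2 + (px3 p - px3 q)^2).

Definition cot (b : R) : R := cos b / sin b.

(* transmitter line gamma_1 and receiver line gamma_2 *)
Definition gamma1 (delta s : R) : pt3 := (2 * s * delta, 2 * s, 0).
Definition gamma2 (r : R) : pt3 := (2 * r, 0, 0).

Definition mirror (p : pt3) : pt3 := (px1 p, px2 p, - px3 p).

(* The three equations fix, for a scene point p, the focal sum L = a + b of its distances a, b to
   the two foci, and the two direction cosines c1, c2 of p seen from the foci.  Since
   a^2 - b^2 is affine in the projections c1 a and c2 b, eliminating b = L - a gives
     a (2 L + 4 r c2 + 4 s c1) = L^2 + 4 r c2 L + 4 (r^2 - (1 + delta^2) s^2).
   As |c1| <= 1 + delta, |c2| <= 1, |s| <= D and |r| <= (1 + delta) D, the factor of a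
   is positive once L > 4 (1 + delta) D, which rho > ln (5 + 8 delta) guarantees.  So
   a and b are determined by the data, hence so are p1 and p2 through the cosines, and
   p3 up to sign. *)

From Stdlib Require Import Reals Lra Psatz.
Open Scope R_scope.

Lemma Rabs_le_sqrt (u S : R) : u ^ 2 <= S -> Rabs u <= sqrt S.
Proof.
  intros Hu. rewrite <- sqrt_Rsqr_abs. apply sqrt_le_1_alt. unfold Rsqr. lra.
Qed.

(* Thanks to [/ 0 = 0], the next two lemmas need no hypothesis [v <> 0]. *)
Lemma div_mul_dominated (u v k : R) : Rabs u <= k * v -> u / v * v = u.
Proof.
  intros Hu. destruct (Req_dec v 0) as [->|Hv].
  - rewrite Rmult_0_r in Hu. revert Hu. unfold Rabs. destruct Rcase_abs; lra.
  - field. exact Hv.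
Qed.

Lemma Rabs_div_le (u v k : R) : 0 <= k -> 0 <= v -> Rabs u <= k * v -> Rabs (u / v) <= k.
Proof.
  intros Hk Hv Hu. unfold Rdiv. destruct (Req_dec v 0) as [->|Hv0].
  - rewrite Rinv_0, Rmult_0_r, Rabs_R0. exact Hk.
  - rewrite Rabs_mult, Rabs_inv, (Rabs_pos_eq v Hv).
    apply (Rmult_le_reg_r v); [lra|].
    rewrite Rmult_assoc, Rinv_l, Rmult_1_r; lra.
Qed.

Lemma cosh_gt_of_ln_lt (a rho : R) : 0 < a -> ln a < rho -> a / 2 < cosh rho.
Proof.
  intros Ha Hrho. unfold cosh.
  assert (a < exp rho) by (rewrite <- (exp_ln a Ha); apply exp_increasing; exact Hrho).
  pose proof (exp_pos (- rho)). lra.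
Qed.

Lemma cot_pos (beta : R) : 0 < beta < PI / 2 -> 0 < cot beta.
Proof.
  intros Hb. pose proof PI_RGT_0. apply Rdiv_lt_0_compat.
  - apply cos_gt_0; lra.
  - apply sin_gt_0; lra.
Qed.

Lemma dist3_sqr (p q : pt3) :
  dist3 p q ^ 2 = (px1 p - px1 q) ^ 2 + (px2 p - px2 q) ^ 2 + (px3 p - px3 q) ^ 2.
Proof.
  apply pow2_sqrt.
  pose proof (pow2_ge_0 (px1 p - px1 q)). pose proof (pow2_ge_0 (px2 p - px2 q)).
  pose proof (pow2_ge_0 (px3 p - px3 q)). lra.
Qed.

Lemma Rabs_px1_sub_le_dist3 (p q : pt3) : Rabs (px1 p - px1 q) <= dist3 p q.
Proof.
  apply Rabs_le_sqrt.
  pose proof (pow2_ge_0 (px2 p - px2 q)). pose proof (pow2_ge_0 (px3 p - px3 q)). lra.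
Qed.

Lemma Rabs_px2_sub_le_dist3 (p q : pt3) : Rabs (px2 p - px2 q) <= dist3 p q.
Proof.
  apply Rabs_le_sqrt.
  pose proof (pow2_ge_0 (px1 p - px1 q)). pose proof (pow2_ge_0 (px3 p - px3 q)). lra.
Qed.

Lemma eq_or_mirror_of_dist3 (x y q : pt3) :
  px3 q = 0 -> px1 x = px1 y -> px2 x = px2 y -> dist3 x q = dist3 y q ->
  x = y \/ x = mirror y.
Proof.
  intros Hq H1 H2 Hd.
  assert (H3 : (px3 x - px3 y) * (px3 x + px3 y) = 0).
  { pose proof (dist3_sqr x q) as Ex. pose proof (dist3_sqr y q) as Ey.
    rewrite Hd, H1, H2, Hq in Ex. rewrite Hq in Ey. nra. }
  destruct x as [[x1 x2] x3], y as [[y1 y2] y3].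
  unfold mirror, px1, px2, px3 in *; cbn [fst snd] in *; subst x1 x2.
  destruct (Rmult_integral _ _ H3); [left | right]; f_equal; lra.
Qed.

Definition half_focal_dist (delta s r : R) : R := sqrt (s ^ 2 + (delta * s - r) ^ 2).

(* Up to the factor -1/2, the s- and r-derivatives of the bistatic travel distance. *)
Definition cos1 (delta s : R) (p : pt3) : R :=
  (delta * (px1 p - 2 * s * delta) + (px2 p - 2 * s)) / dist3 p (gamma1 delta s).
Definition cos2 (r : R) (p : pt3) : R := (px1 p - 2 * r) / dist3 p (gamma2 r).

Section Foci.

Variables (delta s r : R).
Hypothesis delta_ge0 : 0 <= delta.

Lemma Rabs_cos1_num_le (p : pt3) :
  Rabs (delta * (px1 p - 2 * s * delta) + (px2 p - 2 * s))
    <= (1 + delta) * dist3 p (gamma1 delta s).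
Proof.
  assert (H1 : Rabs (px1 p - 2 * s * delta) <= dist3 p (gamma1 delta s))
    by exact (Rabs_px1_sub_le_dist3 p (gamma1 delta s)).
  assert (H2 : Rabs (px2 p - 2 * s) <= dist3 p (gamma1 delta s))
    by exact (Rabs_px2_sub_le_dist3 p (gamma1 delta s)).
  eapply Rle_trans; [apply Rabs_triang|].
  rewrite Rabs_mult, (Rabs_pos_eq delta delta_ge0). nra.
Qed.

Lemma Rabs_cos2_num_le (p : pt3) : Rabs (px1 p - 2 * r) <= 1 * dist3 p (gamma2 r).
Proof. rewrite Rmult_1_l. exact (Rabs_px1_sub_le_dist3 p (gamma2 r)). Qed.

Lemma Rabs_cos1_le (p : pt3) : Rabs (cos1 delta s p) <= 1 + delta.
Proof. apply Rabs_div_le; [lra | apply sqrt_pos | apply Rabs_cos1_num_le]. Qed.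

Lemma Rabs_cos2_le (p : pt3) : Rabs (cos2 r p) <= 1.
Proof. apply Rabs_div_le; [lra | apply sqrt_pos | apply Rabs_cos2_num_le]. Qed.

Lemma cos1_mul_dist3 (p : pt3) :
  cos1 delta s p * dist3 p (gamma1 delta s)
    = delta * (px1 p - 2 * s * delta) + (px2 p - 2 * s).
Proof. eapply div_mul_dominated, Rabs_cos1_num_le. Qed.

Lemma cos2_mul_dist3 (p : pt3) : cos2 r p * dist3 p (gamma2 r) = px1 p - 2 * r.
Proof. eapply div_mul_dominated, Rabs_cos2_num_le. Qed.

Lemma Rabs_s_le : Rabs s <= half_focal_dist delta s r.
Proof. apply Rabs_le_sqrt. pose proof (pow2_ge_0 (delta * s - r)). lra. Qed.

Lemma Rabs_r_le : Rabs r <= (1 + delta) * half_focal_dist delta s r.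
Proof.
  assert (H : Rabs (delta * s - r) <= half_focal_dist delta s r).
  { apply Rabs_le_sqrt. pose proof (pow2_ge_0 s). lra. }
  pose proof Rabs_s_le as Hs.
  revert H Hs. unfold Rabs. repeat destruct Rcase_abs; nra.
Qed.

Lemma focal_dist_equation (p : pt3) :
  let a := dist3 p (gamma1 delta s) in
  let b := dist3 p (gamma2 r) in
  a * (2 * (a + b) + 4 * r * cos2 r p + 4 * s * cos1 delta s p)
    = (a + b) ^ 2 + 4 * r * cos2 r p * (a + b) + 4 * (r ^ 2 - (1 + delta ^ 2) * s ^ 2).
Proof.
  intros a b.
  assert (Ea : a ^ 2 = (px1 p - 2 * s * delta) ^ 2 + (px2 p - 2 * s) ^ 2 + (px3 p - 0) ^ 2)
    by exact (dist3_sqr p (gamma1 delta s)).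
  assert (Eb : b ^ 2 = (px1 p - 2 * r) ^ 2 + (px2 p - 0) ^ 2 + (px3 p - 0) ^ 2)
    by exact (dist3_sqr p (gamma2 r)).
  assert (a ^ 2 - b ^ 2
            = 4 * r * (cos2 r p * b) - 4 * s * (cos1 delta s p * a)
              + 4 * (r ^ 2 - (1 + delta ^ 2) * s ^ 2)).
  { unfold a, b. rewrite cos1_mul_dist3, cos2_mul_dist3. fold a b. rewrite Ea, Eb. ring. }
  lra.
Qed.

Lemma focal_dist_factor_pos (p : pt3) :
  let L := dist3 p (gamma1 delta s) + dist3 p (gamma2 r) in
  4 * (1 + delta) * half_focal_dist delta s r < L ->
  0 < 2 * L + 4 * r * cos2 r p + 4 * s * cos1 delta s p.
Proof.
  intros L HL.
  assert (Hr : Rabs (r * cos2 r p) <= (1 + delta) * half_focal_dist delta s r).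
  { rewrite Rabs_mult, <- (Rmult_1_r ((1 + delta) * _)).
    apply Rmult_le_compat; auto using Rabs_pos, Rabs_r_le, Rabs_cos2_le. }
  assert (Hs : Rabs (s * cos1 delta s p) <= (1 + delta) * half_focal_dist delta s r).
  { rewrite Rabs_mult, Rmult_comm.
    apply Rmult_le_compat; auto using Rabs_pos, Rabs_s_le, Rabs_cos1_le. }
  revert Hr Hs. unfold Rabs. repeat destruct Rcase_abs; lra.
Qed.

Lemma dist3_gamma1_unique (x y : pt3) :
  let L := dist3 x (gamma1 delta s) + dist3 x (gamma2 r) in
  4 * (1 + delta) * half_focal_dist delta s r < L ->
  L = dist3 y (gamma1 delta s) + dist3 y (gamma2 r) ->
  cos1 delta s x = cos1 delta s y -> cos2 r x = cos2 r y ->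
  dist3 x (gamma1 delta s) = dist3 y (gamma1 delta s).
Proof.
  intros L HL HLy Hc1 Hc2.
  pose proof (focal_dist_equation x) as Ex. pose proof (focal_dist_equation y) as Ey.
  cbv zeta in Ex, Ey. fold L in Ex. rewrite <- HLy, <- Hc1, <- Hc2 in Ey.
  apply (Rmult_eq_reg_r (2 * L + 4 * r * cos2 r x + 4 * s * cos1 delta s x)).
  - lra.
  - apply Rgt_not_eq, focal_dist_factor_pos, HL.
Qed.

Lemma px1_eq_of_cos2 (x y : pt3) :
  dist3 x (gamma2 r) = dist3 y (gamma2 r) -> cos2 r x = cos2 r y -> px1 x = px1 y.
Proof.
  intros Hd Hc. pose proof (cos2_mul_dist3 x) as Ex. pose proof (cos2_mul_dist3 y).
  rewrite Hd, Hc in Ex. lra.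
Qed.

Lemma px2_eq_of_cos1 (x y : pt3) :
  dist3 x (gamma1 delta s) = dist3 y (gamma1 delta s) -> cos1 delta s x = cos1 delta s y ->
  px1 x = px1 y -> px2 x = px2 y.
Proof.
  intros Hd Hc H1. pose proof (cos1_mul_dist3 x) as Ex. pose proof (cos1_mul_dist3 y).
  rewrite Hd, Hc, H1 in Ex. lra.
Qed.

End Foci.

Theorem mainTheorem2 (beta s r rho : R) (x y : pt3) :
  0 < beta < PI / 2 ->
  let delta := cot beta in
  let D := sqrt (s ^ 2 + (delta * s - r) ^ 2) in
  0 < D ->
  dist3 x (gamma1 delta s) + dist3 x (gamma2 r)
    = dist3 y (gamma1 delta s) + dist3 y (gamma2 r) ->
  (delta * (px1 x - 2 * s * delta) + (px2 x - 2 * s)) / dist3 x (gamma1 delta s)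
    = (delta * (px1 y - 2 * s * delta) + (px2 y - 2 * s)) / dist3 y (gamma1 delta s) ->
  (px1 x - 2 * r) / dist3 x (gamma2 r) = (px1 y - 2 * r) / dist3 y (gamma2 r) ->
  0 <= rho ->
  cosh rho = (dist3 x (gamma1 delta s) + dist3 x (gamma2 r)) / (2 * D) ->
  rho > ln (5 + 8 * delta) ->
  x = y \/ x = mirror y.
Proof.
  intros Hbeta delta D HD Hsum Hc1 Hc2 _ Hcosh Hrho.
  assert (Hdelta : 0 < delta) by exact (cot_pos beta Hbeta).
  assert (HL : 4 * (1 + delta) * D < dist3 x (gamma1 delta s) + dist3 x (gamma2 r)).
  { pose proof (cosh_gt_of_ln_lt (5 + 8 * delta) rho ltac:(lra) Hrho).
    assert (dist3 x (gamma1 delta s) + dist3 x (gamma2 r) = 2 * D * cosh rho)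
      by (rewrite Hcosh; field; lra).
    nra. }
  assert (Ha : dist3 x (gamma1 delta s) = dist3 y (gamma1 delta s))
    by (apply (dist3_gamma1_unique delta s r); auto; lra).
  assert (Hb : dist3 x (gamma2 r) = dist3 y (gamma2 r)) by lra.
  assert (H1 : px1 x = px1 y) by exact (px1_eq_of_cos2 r x y Hb Hc2).
  apply (eq_or_mirror_of_dist3 x y (gamma2 r)); auto.
  exact (px2_eq_of_cos1 delta s (Rlt_le _ _ Hdelta) x y Ha Hc1 H1).
Qed.
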